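(* Let $G$ be a group with identity $e$, $A$ a set with at least two elements, and $\tau: A^G\to A^G$ a lazy cellular automaton with minimal neighborhood $S \subseteq G$, unique active transition $p \in A^S$ and writing symbol $a \in A \setminus \{p(e)\}$. For $b \in A$ let $S_b := \{s\in S : p(s) = b\}$. Assume at least one of the following holds: \begin{enumerate} \item $S_a = \emptyset$; \item $S_a^{-1}\subseteq S_b^{-1}S_a$ for some $b\in A\setminus\{a\}$; \item $S_a^{-1}\subseteq S_{b_1}^{-1}S_{b_2}$ for some $b_1, b_2\in A\setminus\{a\}$ with $b_1\neq b_2$. \end{enumerate} Then $\tau$ is idempotent, i.e., $\tau^2 = \tau$.
   Context: $A^G$ is the set of maps $G \to A$ with shift action $(g\cdot x)(h) := x(hg)$. A cellular automaton is a map $\tau : A^G \to A^G$ with a finite $S \subseteq G$ (a neighborhood) and $\mu : A^S \to A$ such that $\tau(x)(g) = \mu((g\cdot x)|_S)$; the minimal neighborhood is the unique neighborhood of smallest cardinality. $\tau$ is lazy with unique active transition $p \in A^S$ if there is a local defining map $\mu : A^S \to A$ with $e \in S$ such that for all $z \in A^S$: $\mu(z) = z(e)$ iff $z \neq p$; its writing symbol is $a:=\mu(p)$. For $S, K \subseteq G$, $SK := \{sk : s\in S, k \in K\}$ and $S^{-1} := \{s^{-1} : s\in S\}$. *)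

From Stdlib Require Import List.

Definition is_group {G : Type} (mul : G -> G -> G) (inv : G -> G) (e : G) : Prop :=
  (forall x y z, mul (mul x y) z = mul x (mul y z)) /\
  (forall x, mul e x = x) /\ (forall x, mul x e = x) /\
  (forall x, mul (inv x) x = e) /\ (forall x, mul x (inv x) = e).

Definition finite_subset {G : Type} (S : G -> Prop) : Prop :=
  exists l : list G, forall g, S g <-> In g l.

Definition card_le {G : Type} (S T : G -> Prop) : Prop :=
  exists f : {s | S s} -> {t | T t}, forall u v, f u = f v -> u = v.

Definition shift {G A : Type} (mul : G -> G -> G) (g : G) (x : G -> A) : G -> A :=
  fun h => x (mul h g).

Definition restrict {G A : Type} (S : G -> Prop) (x : G -> A) : {s | S s} -> A :=
  fun s => x (proj1_sig s).

Definition local_map_for {G A : Type} (mul : G -> G -> G) (S : G -> Prop)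
  (mu : ({s | S s} -> A) -> A) (tau : (G -> A) -> (G -> A)) : Prop :=
  forall x g, tau x g = mu (restrict S (shift mul g x)).

Definition is_neighborhood {G A : Type} (mul : G -> G -> G)
  (tau : (G -> A) -> (G -> A)) (S : G -> Prop) : Prop :=
  finite_subset S /\ exists mu : ({s | S s} -> A) -> A, local_map_for mul S mu tau.

Definition is_minimal_neighborhood {G A : Type} (mul : G -> G -> G)
  (tau : (G -> A) -> (G -> A)) (S : G -> Prop) : Prop :=
  is_neighborhood mul tau S /\
  forall T, is_neighborhood mul tau T -> card_le S T.

Definition level_set {G A : Type} (S : G -> Prop) (p : {s | S s} -> A) (b : A) : G -> Prop :=
  fun g => exists H : S g, p (exist _ g H) = b.

Definition set_inv {G : Type} (inv : G -> G) (K : G -> Prop) : G -> Prop :=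
  fun g => exists k, K k /\ g = inv k.
Definition set_mul {G : Type} (mul : G -> G -> G) (K L : G -> Prop) : G -> Prop :=
  fun g => exists k l, K k /\ L l /\ g = mul k l.
Definition subset {G : Type} (K L : G -> Prop) : Prop := forall g, K g -> L g.

From Stdlib Require Import Classical FunctionalExtensionality.

(* Since tau only ever writes a, tau (tau x) can differ from tau x at g only if
   tau x shows the active transition p around g.  Off S_a the configurations
   tau x and x then agree around g, and as tau x g = p e <> a, x differs from p
   at some s in S_a where tau has written a; so x shows p around s g.
   Writing s^-1 = r^-1 l with r in S_b1 and l in S_b2 gives l s = r, and reading
   x at r g in both ways yields b1 = b2.  Condition 2 is the case b2 = a, and an
   empty S_a is covered by it since A has a symbol other than a. *)

Lemma group_mul_of_inv_eq {G : Type} (mul : G -> G -> G) (inv : G -> G) (e : G) :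
  is_group mul inv e -> forall s r l, inv s = mul (inv r) l -> mul l s = r.
Proof.
  intros [Hassoc [Hel [Her [Hil Hir]]]] s r l Hs.
  assert (Hl : l = mul r (inv s)) by (rewrite Hs, <- Hassoc, Hir, Hel; reflexivity).
  rewrite Hl, Hassoc, Hil, Her. reflexivity.
Qed.

Section LazyAutomaton.

Variables (G A : Type) (mul : G -> G -> G) (inv : G -> G) (e : G).
Hypothesis HG : is_group mul inv e.
Let mul_assoc : forall x y z, mul (mul x y) z = mul x (mul y z) := proj1 HG.
Let mul_e_l : forall g, mul e g = g := proj1 (proj2 HG).
Variables (S : G -> Prop) (He : S e).
Variables (mu : ({s | S s} -> A) -> A) (tau : (G -> A) -> G -> A).
Hypothesis Hmu : local_map_for mul S mu tau.
Variable p : {s | S s} -> A.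
Hypothesis mu_inactive : forall z, z <> p -> mu z = z (exist _ e He).
Hypothesis writing_ne : mu p <> p (exist _ e He).

Definition active (x : G -> A) (g : G) : Prop := restrict S (shift mul g x) = p.

Lemma active_spec x g :
  active x g <-> forall t : {s | S s}, x (mul (proj1_sig t) g) = p t.
Proof.
  split.
  - intros Hact t. rewrite <- Hact. reflexivity.
  - intros Hx. apply functional_extensionality. exact Hx.
Qed.

Lemma tau_active x g : active x g -> tau x g = mu p.
Proof. intros Hact. rewrite Hmu. unfold active in Hact. rewrite Hact. reflexivity. Qed.

Lemma tau_inactive x g : ~ active x g -> tau x g = x g.
Proof.
  intros Hinact. rewrite Hmu, mu_inactive by exact Hinact.
  unfold restrict, shift; simpl. rewrite mul_e_l. reflexivity.
Qed.

Lemma tau_fixes_unless_writing x g : tau x g <> mu p -> tau x g = x g.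
Proof. intros Hne. apply tau_inactive. intros Hact. apply Hne, tau_active, Hact. Qed.

Lemma active_tau_agree_off_writing x g (t : {s | S s}) :
  active (tau x) g -> p t <> mu p -> x (mul (proj1_sig t) g) = p t.
Proof.
  intros Hact Ht. rewrite active_spec in Hact.
  rewrite <- (tau_fixes_unless_writing x), Hact by (rewrite Hact; exact Ht).
  reflexivity.
Qed.

Lemma active_tau_writing_cell x g :
  active (tau x) g -> exists s : {s | S s}, p s = mu p /\ active x (mul (proj1_sig s) g).
Proof.
  intros Hact.
  assert (Hx : ~ active x g).
  { intros Hx. apply writing_ne. rewrite <- (tau_active x g Hx).
    rewrite active_spec in Hact. rewrite <- Hact. simpl.
    rewrite mul_e_l. reflexivity. }
  rewrite active_spec in Hx. apply not_all_ex_not in Hx as [s Hxs].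
  assert (Hps : p s = mu p).
  { apply NNPP. intros Hps. apply Hxs, active_tau_agree_off_writing; assumption. }
  exists s. split; [exact Hps |].
  apply NNPP. intros Hinact. apply Hxs.
  rewrite <- (tau_inactive _ _ Hinact). rewrite active_spec in Hact. apply Hact.
Qed.

Theorem tau_idempotent_of_level_cover :
  (exists b1 b2, b1 <> mu p /\ b1 <> b2 /\
     subset (set_inv inv (level_set S p (mu p)))
            (set_mul mul (set_inv inv (level_set S p b1)) (level_set S p b2))) ->
  forall x, tau (tau x) = tau x.
Proof.
  intros [b1 [b2 [Hb1 [Hb12 Hcover]]]] x.
  apply functional_extensionality. intros g.
  destruct (classic (active (tau x) g)) as [Hact | Hinact].
  2: { apply tau_inactive. exact Hinact. }
  exfalso.
  destruct (active_tau_writing_cell x g Hact) as [[s Hs] [Hps Hxs]].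
  destruct (Hcover (inv s)) as [k [l [[r [[Hr Hpr] ->]] [[Hl Hpl] Hsrl]]]].
  { exists s. split; [exists Hs; exact Hps | reflexivity]. }
  assert (Hrg : x (mul r g) = b1).
  { rewrite <- Hpr. apply (active_tau_agree_off_writing x g (exist _ r Hr) Hact).
    rewrite Hpr. exact Hb1. }
  assert (Hls : x (mul l (mul s g)) = b2).
  { rewrite <- Hpl. rewrite active_spec in Hxs. apply (Hxs (exist _ l Hl)). }
  rewrite <- mul_assoc, (group_mul_of_inv_eq mul inv e HG s r l Hsrl) in Hls.
  apply Hb12. rewrite <- Hrg, <- Hls. reflexivity.
Qed.

End LazyAutomaton.

Lemma subset_of_empty {G : Type} (K L : G -> Prop) (inv : G -> G) :
  (forall g, ~ K g) -> subset (set_inv inv K) L.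
Proof. intros HK g [k [Hk _]]. exfalso. exact (HK k Hk). Qed.

Theorem corollary3
  (G : Type) (mul : G -> G -> G) (inv : G -> G) (e : G)
  (HG : is_group mul inv e)
  (A : Type) (HA : exists a1 a2 : A, a1 <> a2)
  (tau : (G -> A) -> (G -> A))
  (S : G -> Prop) (HS : is_minimal_neighborhood mul tau S)
  (He : S e)
  (mu : ({s | S s} -> A) -> A) (Hmu : local_map_for mul S mu tau)
  (p : {s | S s} -> A)
  (Hlazy : forall z : {s | S s} -> A, mu z = z (exist _ e He) <-> z <> p)
  (a : A) (Ha : a = mu p) (Hap : a <> p (exist _ e He)) :
  (forall g, ~ level_set S p a g) \/
  (exists b, b <> a /\
     subset (set_inv inv (level_set S p a))
            (set_mul mul (set_inv inv (level_set S p b)) (level_set S p a))) \/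
  (exists b1 b2, b1 <> a /\ b2 <> a /\ b1 <> b2 /\
     subset (set_inv inv (level_set S p a))
            (set_mul mul (set_inv inv (level_set S p b1)) (level_set S p b2))) ->
  forall x : G -> A, tau (tau x) = tau x.
Proof.
  subst a. intros Hcases.
  apply (tau_idempotent_of_level_cover G A mul inv e HG S He mu tau Hmu p
           (fun z => proj2 (Hlazy z)) Hap).
  destruct Hcases as [Hempty | [[b [Hb Hcover]] | [b1 [b2 [Hb1 [_ [Hb12 Hcover]]]]]]].
  - assert (Hb : exists b, b <> mu p).
    { destruct HA as [a1 [a2 Ha12]].
      destruct (classic (a1 = mu p)) as [-> | Ha1]; eauto. }
    destruct Hb as [b Hb].
    exists b, (mu p). repeat split; [exact Hb | exact Hb | apply subset_of_empty, Hempty].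
  - exists b, (mu p). auto.
  - exists b1, b2. auto.
Qed.
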